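(* Let $\mathsf{T}$ be a rooted plane tree and $\delta\in\mathcal{O}(\mathsf{T})$. For each $u\in\mathsf{T}$, let $o_u$ be the minimal ornament of $\delta$ (i.e., among the sets $\delta(w)$, $w\in\mathsf{T}$) that properly contains $\delta(u)$; if no such ornament exists, let $o_u=\mathsf{T}$. Then $\delta\in\mathsf{Pop}(\mathcal{O}(\mathsf{T}))$ if and only if for every $u\in\mathsf{T}$ and every child $u'$ of $u$ with $u'\in\delta(u)$, we have $\Delta_{\delta(u)}(u')\neq\Delta_{o_u}(u')$.
   Context: A rooted plane tree $\mathsf{T}$ is a finite tree with a distinguished root $\mathfrak{r}$, regarded as a poset $\leq_\mathsf{T}$ in which $v'\leq_\mathsf{T} v$ iff $v$ lies on the path from $v'$ to $\mathfrak{r}$; the children of $v$ are the nodes covered by $v$. An ornament of $\mathsf{T}$ is a nonempty set of nodes inducing a connected subgraph. For a set $S$ of nodes and $u\in S$, $\Delta_S(u)=\{w\in S:w\leq_\mathsf{T} u\}$. An ornamentation of $\mathsf{T}$ is a map $\delta$ from $\mathsf{T}$ to ornaments such that (1) for every $v$, the unique maximal element of $\delta(v)$ is $v$; (2) for all $v,v'$, $\delta(v)$ and $\delta(v')$ are either nested or disjoint. $\mathcal{O}(\mathsf{T})$ is the set of ornamentations ordered by $\delta\leq\delta'$ iff $\delta(v)\subseteq\delta'(v)$ for all $v$; it is a lattice with meet $(\delta\wedge\delta')(v)=\delta(v)\cap\delta'(v)$. The pop-stack operator is $\mathsf{Pop}(\delta)=\bigwedge(\{\delta\}\cup\{\delta':\delta'\lessdot\delta\})$,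 where $\lessdot$ denotes the cover relation of $\mathcal{O}(\mathsf{T})$. *)

(* A rooted tree is encoded on a finite type V of nodes by a
   parent map [par] with [par r = r] and every node reaching the root [r]. *)
From mathcomp Require Import all_boot.
Set Implicit Arguments. Unset Strict Implicit. Unset Printing Implicit Defensive.

Section Ornaments.
Variables (V : finType) (r : V) (par : V -> V).

Definition is_rooted_tree : Prop :=
  par r = r /\ forall v : V, exists k : nat, iter k par v = r.

Definition leT (v' v : V) : bool := [exists k : 'I_#|V|, iter k par v' == v].

Definition childT (u' u : V) : bool := (u' != u) && (par u' == u).

Definition adjT (x y : V) : bool := (x != y) && ((par x == y) || (par y == x)).

Definition connectedT (S : {set V}) : bool :=
  [forall x in S, forall y in S,
     connect [rel a b | [&& a \in S, b \in S & adjT a b]] x y].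

Definition ornament (S : {set V}) : bool := (S != set0) && connectedT S.

Definition is_maximal (S : {set V}) (w : V) : bool :=
  (w \in S) && [forall x in S, leT w x ==> (x == w)].

Definition ornamentation (d : {ffun V -> {set V}}) : bool :=
  [forall v, ornament (d v) && ([set w in d v | is_maximal (d v) w] == [set v])]
  && [forall v, forall v', [|| d v \subset d v', d v' \subset d v
                             | [disjoint d v & d v']]].

Definition leO (d d' : {ffun V -> {set V}}) : bool := [forall v, d v \subset d' v].
Definition ltO (d d' : {ffun V -> {set V}}) : bool := leO d d' && (d != d').

Definition coverO (d' d : {ffun V -> {set V}}) : bool :=
  [&& ornamentation d', ornamentation d, ltO d' d &
      ~~ [exists d'' : {ffun V -> {set V}},
            [&& ornamentation d'', ltO d' d'' & ltO d'' d]]].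

(* Pop(d) = meet of {d} and its lower covers; the meet is pointwise intersection *)
Definition Pop (d : {ffun V -> {set V}}) : {ffun V -> {set V}} :=
  [ffun v => d v :&: \bigcap_(d' | coverO d' d) d' v].

Definition in_Pop_image (d : {ffun V -> {set V}}) : Prop :=
  exists d0, ornamentation d0 /\ Pop d0 = d.

Definition DeltaS (S : {set V}) (u : V) : {set V} := [set w in S | leT w u].

Definition is_o (d : {ffun V -> {set V}}) (u : V) (S : {set V}) : Prop :=
  ((exists w, S = d w) /\ d u \proper S /\
     forall w', d u \proper d w' -> ~~ (d w' \proper S))
  \/ ((forall w, ~~ (d u \proper d w)) /\ S = [set: V]).

End Ornaments.

From mathcomp Require Import all_boot.
Set Implicit Arguments. Unset Strict Implicit. Unset Printing Implicit Defensive.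

(* Call x a top of d u if d x is a maximal
   ornament of d strictly inside d u, and a minimal top if moreover no other
   top lies below x in the tree. The lower covers of d are exactly the
   ornamentations obtained by deleting from d u the nodes below one minimal
   top of d u, so Pop(d)(u) is d u minus the down-sets of its minimal tops.
   If d = Pop(D) and u' is a child of u lying in d u, some minimal top
   y <= u' of D u is deleted from d u but kept in o_u, so y lies in
   Delta_{o_u}(u') and not in Delta_{d u}(u'). Conversely, if the condition
   holds then d = Pop(d0) for the ornamentation d0(u) = Delta_{o_u}(u): every
   node of d0 u outside d u lies below a minimal top, while a node of d u
   below a minimal top y of d0 u would make y a child of u, and then the node
   separating Delta_{d u}(y) from Delta_{o_u}(y) lies in d0 y, which is
   contained in o_y = d u. *)

Section OrnamentationPop.
Variables (V : finType) (r : V) (par : V -> V).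
Hypothesis tree : is_rooted_tree r par.

Local Notation "x <=T y" := (leT par x y) (at level 70, no associativity).

(** * The tree order *)

Lemma iter_par_root k : iter k par r = r.
Proof. by case: tree => par_r _; elim: k => //= k ->. Qed.

Lemma leTP x y : reflect (exists k, iter k par x = y) (x <=T y).
Proof.
apply: (iffP existsP) => [[k /eqP <-]|[k <-]]; first by exists k.
have k_lt : findex par x (iter k par x) < #|V|.
  by rewrite (leq_trans (findex_max (fconnect_iter par k x))) // max_card.
by exists (Ordinal k_lt); rewrite /= iter_findex // fconnect_iter.
Qed.

Lemma leTT x : x <=T x.
Proof. by apply/leTP; exists 0. Qed.

Lemma leT_trans y x z : x <=T y -> y <=T z -> x <=T z.
Proof. by move=> /leTP [a <-] /leTP [b <-]; apply/leTP; exists (b + a); rewrite iterD. Qed.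

Lemma leT_par x : x <=T par x.
Proof. by apply/leTP; exists 1. Qed.

Lemma leT_antisym x y : x <=T y -> y <=T x -> x = y.
Proof.
move=> /leTP [[|a] xy] /leTP [b yx] //.
have cycle m : iter (m * (b + a.+1)) par x = x.
  by elim: m => // m IH; rewrite mulSn iterD IH iterD xy yx.
have x_root : x = r.
  case: tree => _ /(_ x) [k xk]; rewrite -(cycle k) -(subnK (leq_pmulr k _)) ?addnS //.
  by rewrite iterD xk iter_par_root.
by move: xy; rewrite x_root iter_par_root.
Qed.

Lemma leT_total w a b : w <=T a -> w <=T b -> (a <=T b) || (b <=T a).
Proof.
move=> /leTP [i <-] /leTP [j <-]; case: (leqP i j) => [ij|/ltnW ji].
  by apply/orP; left; apply/leTP; exists (j - i); rewrite -iterD subnK.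
by apply/orP; right; apply/leTP; exists (i - j); rewrite -iterD subnK.
Qed.

Lemma par_leT w v : w <=T v -> w != v -> par w <=T v.
Proof.
move=> /leTP [[|k] wv] w_neq_v; first by rewrite -wv eqxx in w_neq_v.
by apply/leTP; exists k; rewrite -iterSr.
Qed.

Lemma par_neq x v : x <=T v -> x != v -> par x != x.
Proof.
move=> xv x_neq_v; apply/eqP => par_x.
have x_root : x = r.
  by case: tree => _ /(_ x) [k <-]; elim: k => //= k <-; rewrite par_x.
have : v <=T x by rewrite x_root; apply/leTP; case: tree => _ /(_ v).
by move/(leT_antisym xv)/eqP; rewrite (negbTE x_neq_v).
Qed.

Lemma leT_child y u : y <=T u -> y != u ->
  exists c, [/\ par c = u, c != u & y <=T c].
Proof.
move=> /leTP [k]; elim: k y => [|k IH] y yu y_neq_u; first by rewrite -yu eqxx in y_neq_u.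
rewrite iterSr in yu; case: (eqVneq (par y) u) => [par_y|par_y_neq].
  by exists y; rewrite leTT.
have [c [par_c c_neq_u yc]] := IH _ yu par_y_neq.
by exists c; split => //; apply: leT_trans (leT_par y) yc.
Qed.

Lemma leT_maximal (P : pred V) x : P x ->
  exists2 m, P m & forall m', P m' -> m <=T m' -> m' = m.
Proof.
move=> Px; have [m Pm m_min] := arg_minnP (fun y => #|[set z | y <=T z]|) Px.
exists m => // m' Pm' mm'; apply/eqP/negPn/negP => m'_neq_m.
have : [set z | m' <=T z] \proper [set z | m <=T z].
  apply/properP; split; first by apply/subsetP => z; rewrite !inE; apply: leT_trans.
  exists m; rewrite !inE ?leTT //; apply: contra m'_neq_m => m'm.
  by rewrite (leT_antisym mm' m'm).
by move/proper_card; rewrite ltnNge m_min.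
Qed.

Lemma leT_minimal (P : pred V) x : P x ->
  exists2 m, P m & forall m', P m' -> m' <=T m -> m' = m.
Proof.
move=> Px; have [m Pm m_min] := arg_minnP (fun y => #|[set z | z <=T y]|) Px.
exists m => // m' Pm' m'm; apply/eqP/negPn/negP => m'_neq_m.
have : [set z | z <=T m'] \proper [set z | z <=T m].
  apply/properP; split; first by apply/subsetP => z; rewrite !inE => /leT_trans; apply.
  exists m; rewrite !inE ?leTT //; apply: contra m'_neq_m => mm'.
  by rewrite (leT_antisym m'm mm').
by move/proper_card; rewrite ltnNge m_min.
Qed.

(** * Ornaments and ornamentations *)

Definition ornament_top (S : {set V}) v :=
  (v \in S) && [forall w in S, (w <=T v) && ((w != v) ==> (par w \in S))].

Lemma ornament_topP (S : {set V}) v :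
  reflect (v \in S /\ forall w, w \in S -> w <=T v /\ (w != v -> par w \in S))
          (ornament_top S v).
Proof.
apply: (iffP andP) => [[v_in /forall_inP S_top]|[v_in S_top]]; split => //.
  by move=> w /S_top /andP [-> /implyP].
by apply/forall_inP => w /S_top [-> /implyP].
Qed.

Section OrnamentTop.
Variables (S : {set V}) (v : V).

Lemma ornament_top_in : ornament_top S v -> v \in S.
Proof. by case/ornament_topP. Qed.

Lemma ornament_top_le w : ornament_top S v -> w \in S -> w <=T v.
Proof. by move=> /ornament_topP [_ S_top] /S_top []. Qed.

Lemma ornament_top_par w : ornament_top S v -> w \in S -> w != v -> par w \in S.
Proof. by move=> /ornament_topP [_ S_top] /S_top []. Qed.

Lemma ornament_top_convex x y : ornament_top S v -> x \in S -> x <=T y -> y <=T v -> y \in S.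
Proof.
move=> S_top + /leTP [k <-]; elim: k x => [|k IH] x x_in yv //; rewrite iterSr in yv *.
case: (eqVneq x v) => [x_v|x_neq_v]; last exact: IH (ornament_top_par S_top x_in x_neq_v) yv.
have vy : v <=T iter k par (par v) by apply/leTP; exists k.+1; rewrite iterSr.
by rewrite x_v in yv *; rewrite (leT_antisym yv vy) ornament_top_in.
Qed.

End OrnamentTop.

Definition adj_in (S : {set V}) := [rel a b | [&& a \in S, b \in S & adjT par a b]].

Lemma ornament_top_connect (S : {set V}) v x : ornament_top S v -> x \in S ->
  connect (adj_in S) x v /\ connect (adj_in S) v x.
Proof.
move=> S_top x_in; have /leTP [k] := ornament_top_le S_top x_in.
elim: k x x_in => [|k IH] x x_in xv; first by rewrite -xv connect0.
case: (eqVneq x v) => [->|x_neq_v]; first by rewrite connect0.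
have par_in := ornament_top_par S_top x_in x_neq_v.
have [par_v v_par] := IH _ par_in (etrans (esym (iterSr _ _ _)) xv).
have par_x_neq := par_neq (ornament_top_le S_top x_in) x_neq_v.
have x_par : adj_in S x (par x) by rewrite /= x_in par_in /adjT eq_sym par_x_neq eqxx.
have par_x : adj_in S (par x) x by rewrite /= x_in par_in /adjT par_x_neq eqxx orbT.
by split; [apply: connect_trans par_v|apply: connect_trans v_par _]; apply: connect1.
Qed.

Lemma adj_in_path_exit (S : {set V}) w x p : x <=T w -> path (adj_in S) x p ->
  ~~ (last x p <=T w) -> par w \in S.
Proof.
elim: p x => [|y p IH] x /= xw; first by rewrite xw.
case/andP => /and3P [x_in y_in /andP [_ /orP [/eqP par_x|/eqP par_y]]] p_path p_exit.
  case: (boolP (y <=T w)) => [yw|y_not_w]; first exact: IH yw p_path p_exit.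
  case: (eqVneq x w) => [<-|x_neq_w]; first by rewrite par_x.
  by rewrite -par_x par_leT in y_not_w.
case: (boolP (y <=T w)) => [yw|y_not_w]; first exact: IH yw p_path p_exit.
by rewrite (leT_trans (leT_par y)) // par_y in y_not_w.
Qed.

Lemma ornament_topE (S : {set V}) v :
  ornament par S && ([set w in S | is_maximal par S w] == [set v]) = ornament_top S v.
Proof.
apply/idP/idP => [/andP [/andP [_ /forall_inP S_conn] /eqP S_max]|S_top].
  have [v_in /andP [_ /forall_inP v_max]] : v \in S /\ is_maximal par S v.
    by have := set11 v; rewrite -S_max inE => /andP [].
  have below_v w : w \in S -> w <=T v.
    move=> w_in; have [m /andP [m_in wm] m_max] :=
      @leT_maximal [pred m | (m \in S) && (w <=T m)] w (introT andP (conj w_in (leTT w))).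
    suff : m \in [set w in S | is_maximal par S w] by rewrite S_max inE => /eqP <-.
    rewrite inE /is_maximal m_in; apply/forall_inP => x x_in; apply/implyP => mx.
    by apply/eqP/m_max; rewrite //= x_in (leT_trans wm mx).
  apply/ornament_topP; split=> // w w_in; split=> [|w_neq_v]; first exact: below_v.
  have /connectP [p p_path v_last] := forall_inP (S_conn _ w_in) _ v_in.
  apply: adj_in_path_exit (leTT w) p_path _; rewrite -v_last.
  by apply: contra w_neq_v => vw; rewrite (leT_antisym (below_v _ w_in) vw).
apply/andP; split.
  apply/andP; split; first by apply/set0Pn; exists v; apply: ornament_top_in S_top.
  apply/forall_inP => x x_in; apply/forall_inP => y y_in.
  apply: connect_trans (ornament_top_connect S_top x_in).1 (ornament_top_connect S_top y_in).2.
apply/eqP/setP => w; rewrite !inE /is_maximal.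
apply/idP/idP => [/andP [w_in /andP [_ /forall_inP w_max]]|/eqP ->].
  by rewrite eq_sym -(implyTb (v == w)) -(ornament_top_le S_top w_in) w_max ?ornament_top_in.
rewrite ornament_top_in //; apply/forall_inP => x x_in; apply/implyP => vx.
by rewrite (leT_antisym (ornament_top_le S_top x_in) vx).
Qed.

Local Notation orn := (ornamentation par).
Local Notation FF := {ffun V -> {set V}}.

Section Ornamentation.
Variable d : FF.

Lemma ornamentation_top v : orn d -> ornament_top (d v) v.
Proof. by move=> /andP [/forallP /(_ v) + _]; rewrite ornament_topE. Qed.

Lemma ornamentation_in v : orn d -> v \in d v.
Proof. by move/(ornamentation_top v)/ornament_top_in. Qed.

Lemma ornamentation_le v w : orn d -> w \in d v -> w <=T v.
Proof. by move=> /(ornamentation_top v)/ornament_top_le; apply. Qed.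

Lemma ornamentation_nested a b t : orn d -> t \in d a -> t \in d b ->
  d a \subset d b \/ d b \subset d a.
Proof.
move=> /andP [_ /forallP /(_ a) /forallP /(_ b) /or3P [ab|ba|dis]] ta tb; [by left|by right|].
by rewrite (disjointFr dis ta) in tb.
Qed.

Lemma ornamentation_sub v w : orn d -> w \in d v -> d w \subset d v.
Proof.
move=> d_orn w_in; case: (ornamentation_nested d_orn (ornamentation_in w d_orn) w_in) => // vw.
have v_in := subsetP vw _ (ornamentation_in v d_orn).
by rewrite (leT_antisym (ornamentation_le d_orn w_in) (ornamentation_le d_orn v_in)).
Qed.

Lemma ornamentation_proper v w : orn d -> w \in d v -> w != v -> d w \proper d v.
Proof.
move=> d_orn w_in w_neq_v; rewrite properEneq ornamentation_sub // andbT.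
apply: contra w_neq_v => /eqP dwv; have v_in : v \in d w by rewrite dwv ornamentation_in.
by rewrite (leT_antisym (ornamentation_le d_orn w_in) (ornamentation_le d_orn v_in)).
Qed.

Lemma proper_ornamentation_in v w : orn d -> d v \proper d w -> v \in d w.
Proof. by move=> d_orn /proper_sub/subsetP; apply; apply: ornamentation_in. Qed.

Lemma proper_ornamentation_le v w : orn d -> d v \proper d w -> v <=T w.
Proof. by move=> d_orn /(proper_ornamentation_in d_orn)/(ornamentation_le d_orn). Qed.

End Ornamentation.

Lemma ornamentation_intro (d : FF) : (forall v, ornament_top (d v) v) ->
  (forall v w, w \in d v -> d w \subset d v) -> orn d.
Proof.
move=> d_top d_sub; apply/andP; split; first by apply/forallP => v; rewrite ornament_topE.
apply/forallP => v; apply/forallP => v'; case: (boolP [disjoint d v & d v']); rewrite ?orbT //.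
rewrite -setI_eq0 => /set0Pn [t]; rewrite inE => /andP [tv tv'].
have tv_le := ornament_top_le (d_top v) tv; have tv'_le := ornament_top_le (d_top v') tv'.
have [v_v'|v'_v] := orP (leT_total tv_le tv'_le).
  by rewrite d_sub // (ornament_top_convex (d_top v') tv' tv_le v_v').
by rewrite (d_sub v v') ?orbT // (ornament_top_convex (d_top v) tv tv'_le v'_v).
Qed.

(** * Lower covers and the pop-stack operator *)

(* [subtop d u x]: [d x] is a maximal ornament of [d] strictly inside [d u]. *)
Definition subtop (d : FF) u x :=
  [&& x \in d u, x != u &
      [forall w, [&& x <=T w, w <=T u, w != x & w != u] ==> (x \notin d w)]].

Definition min_subtop (d : FF) u y :=
  subtop d u y && [forall x, subtop d u x && (x <=T y) ==> (x == y)].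

Definition pop_set (d : FF) u :=
  [set z in d u | ~~ [exists y, min_subtop d u y && (z <=T y)]].

Definition prune (d : FF) u y : FF :=
  [ffun v => if v == u then [set z in d u | ~~ (z <=T y)] else d v].

Section Subtop.
Variables (d : FF) (u : V).

Lemma subtopP x : reflect
  [/\ x \in d u, x != u &
      forall w, x <=T w -> w <=T u -> w != x -> w != u -> x \notin d w]
  (subtop d u x).
Proof.
apply: (iffP and3P) => [[-> -> /forallP x_max]|[-> -> x_max]]; split=> //.
  by move=> w xw wu wx w_u; apply: (implyP (x_max w)); rewrite xw wu wx w_u.
by apply/forallP => w; apply/implyP => /and4P [xw wu wx w_u]; apply: x_max.
Qed.

Lemma subtop_in x : subtop d u x -> x \in d u. Proof. by case/subtopP. Qed.
Lemma subtop_neq x : subtop d u x -> x != u. Proof. by case/subtopP. Qed.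
Lemma subtop_notin x w : subtop d u x -> x <=T w -> w <=T u -> w != x -> w != u ->
  x \notin d w.
Proof. by case/subtopP => _ _; apply. Qed.

Lemma min_subtop_subtop y : min_subtop d u y -> subtop d u y. Proof. by case/andP. Qed.
Lemma min_subtop_min y x : min_subtop d u y -> subtop d u x -> x <=T y -> x = y.
Proof. by case/andP => _ /forallP /(_ x) /implyP y_min x_sub xy; apply/eqP/y_min/andP. Qed.

Lemma min_subtop_exists x : subtop d u x -> exists2 y, min_subtop d u y & y <=T x.
Proof.
move=> x_sub; have [y /andP [y_sub yx] y_min] :=
  @leT_minimal [pred y | subtop d u y && (y <=T x)] x (introT andP (conj x_sub (leTT x))).
exists y => //; rewrite /min_subtop y_sub; apply/forallP => x'; apply/implyP => /andP [x'_sub x'y].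
by apply/eqP/y_min; rewrite //= x'_sub (leT_trans x'y yx).
Qed.

Lemma subtop_le x : orn d -> subtop d u x -> x <=T u.
Proof. by move=> d_orn /subtop_in/(ornamentation_le d_orn). Qed.

Lemma subtop_exists z : orn d -> z \in d u -> z != u ->
  exists2 x, subtop d u x & z \in d x.
Proof.
move=> d_orn z_in z_neq_u.
pose P := [pred w | [&& z <=T w, w <=T u, w != u & z \in d w]].
have Pz : P z by rewrite /= leTT (ornamentation_le d_orn z_in) z_neq_u ornamentation_in.
have [x /and4P [zx xu x_neq_u z_in_x] x_max] := leT_maximal Pz.
exists x => //; apply/subtopP; split => //.
  exact: ornament_top_convex (ornamentation_top u d_orn) z_in zx xu.
move=> w xw wu w_neq_x w_neq_u; apply: contra w_neq_x => x_in_w.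
have Pw : P w by rewrite /= (leT_trans zx xw) wu w_neq_u (subsetP (ornamentation_sub d_orn x_in_w)).
by rewrite (x_max _ Pw xw).
Qed.

End Subtop.

Section Prune.
Variables (d : FF) (u : V).

Lemma prune_ornamentation y : orn d -> subtop d u y -> orn (prune d u y).
Proof.
move=> d_orn y_sub; have yu := subtop_le d_orn y_sub.
have u_top := ornamentation_top u d_orn.
apply: ornamentation_intro => [v|v w]; rewrite !ffunE.
  case: (eqVneq v u) => [->|_]; last exact: ornamentation_top.
  apply/ornament_topP; split.
    rewrite inE ornamentation_in //=; apply: contra (subtop_neq y_sub) => uy.
    by rewrite (leT_antisym yu uy).
  move=> w; rewrite inE => /andP [w_in w_not_y].
  split=> [|w_neq_u]; first exact: ornament_top_le u_top w_in.
  rewrite inE (ornament_top_par u_top w_in w_neq_u).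
  by apply: contra w_not_y; apply: leT_trans (leT_par w).
case: (eqVneq v u) => [_|v_neq_u]; case: (eqVneq w u) => [->|w_neq_u] //.
- rewrite inE => /andP [w_in w_not_y]; apply/subsetP => t t_in.
  rewrite inE (subsetP (ornamentation_sub d_orn w_in) _ t_in) /=.
  have tw := ornamentation_le d_orn t_in.
  apply: contraNN w_not_y => ty; case: (eqVneq w y) => [->|w_neq_y]; first exact: leTT.
  case/orP: (leT_total tw ty) => // wy.
  have y_in : y \in d w := ornament_top_convex (ornamentation_top w d_orn) t_in ty wy.
  by rewrite (negbTE (subtop_notin y_sub wy (ornamentation_le d_orn w_in) w_neq_y w_neq_u)) in y_in.
- move=> u_in; apply: subset_trans (ornamentation_sub d_orn u_in).
  by apply/subsetP => t; rewrite inE => /andP [].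
- exact: ornamentation_sub.
Qed.

Lemma prune_lt y : subtop d u y -> ltO (prune d u y) d.
Proof.
move=> y_sub; apply/andP; split.
  apply/forallP => v; rewrite ffunE; case: eqP => [->|_]; last exact: subxx.
  by apply/subsetP => t; rewrite inE => /andP [].
apply: contraTneq (subtop_in y_sub) => <-.
by rewrite ffunE eqxx inE leTT andbF.
Qed.

Lemma subtop_below_missing (d' : FF) z : orn d -> orn d' ->
  (forall w, d w \proper d u -> d' w = d w) -> z \in d u -> z \notin d' u ->
  exists x, [/\ subtop d u x, z <=T x & forall t, t \in d' u -> ~~ (t <=T x)].
Proof.
move=> d_orn d'_orn d'_eq z_in z_notin.
have z_neq_u : z != u by apply: contraNneq z_notin => ->; apply: ornamentation_in.
have [x x_sub z_in_x] := subtop_exists d_orn z_in z_neq_u.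
have d'x : d' x = d x := d'_eq _ (ornamentation_proper d_orn (subtop_in x_sub) (subtop_neq x_sub)).
exists x; split => //; first exact: ornamentation_le d_orn z_in_x.
move=> t t_in; apply: contra z_notin => tx.
have x_in : x \in d' u :=
  ornament_top_convex (ornamentation_top u d'_orn) t_in tx (subtop_le d_orn x_sub).
by apply: (subsetP (ornamentation_sub d'_orn x_in)); rewrite d'x.
Qed.

Lemma prune_coverO y : orn d -> min_subtop d u y -> coverO par (prune d u y) d.
Proof.
move=> d_orn y_min; have y_sub := min_subtop_subtop y_min.
rewrite /coverO prune_ornamentation // d_orn prune_lt //=.
apply/existsP => -[d'' /and3P [d''_orn /andP [le1 ne1] /andP [le2 ne2]]].
have d''_eq w : w != u -> d'' w = d w.
  move=> w_neq_u; apply/eqP; rewrite eqEsubset (forallP le2 w) /=.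
  by move: (forallP le1 w); rewrite ffunE (negbTE w_neq_u).
have d''u_neq : d'' u != d u.
  apply: contraNneq ne2 => d''u; apply/eqP/ffunP => w.
  by case: (eqVneq w u) => [->|/d''_eq].
have /properP [_ [z z_in z_notin]] : d'' u \proper d u.
  by rewrite properEneq d''u_neq (forallP le2 u).
have d''_in w : d w \proper d u -> d'' w = d w.
  by case: (eqVneq w u) => [->|/d''_eq //]; rewrite properxx.
have [x [x_sub zx x_far]] := subtop_below_missing d_orn d''_orn d''_in z_in z_notin.
have zy : z <=T y.
  apply: contraNT z_notin => z_not_y; apply: (subsetP (forallP le1 u)).
  by rewrite ffunE eqxx inE z_in.
have yx : y <=T x by case/orP: (leT_total zx zy) => // xy; rewrite (min_subtop_min y_min x_sub xy) leTT.
move/negP: ne1; apply; apply/eqP/ffunP => w.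
case: (eqVneq w u) => [->|w_neq_u]; last by rewrite d''_eq // ffunE (negbTE w_neq_u).
apply/eqP; rewrite eqEsubset (forallP le1 u) /=; apply/subsetP => t t_in.
rewrite ffunE eqxx inE (subsetP (forallP le2 u) _ t_in) /=.
by apply: contra (x_far _ t_in) => ty; apply: leT_trans ty yx.
Qed.

End Prune.

Lemma coverO_prune (d d' : FF) : orn d -> coverO par d' d ->
  exists u y, min_subtop d u y /\ d' = prune d u y.
Proof.
move=> d_orn /and4P [d'_orn _ /andP [le' ne'] no_between].
have [u0 u0_neq] : exists u0, d' u0 != d u0.
  apply/existsP; apply: contraNT ne' => /existsPn d'_eq.
  by apply/eqP/ffunP => u; apply/eqP/negPn.
have [u /= u_neq u_min] := @arg_minnP _ u0 [pred u | d' u != d u] (fun u => #|d u|) u0_neq.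
have d'_in w : d w \proper d u -> d' w = d w.
  move=> w_in; apply/eqP/negPn; apply: contraTN w_in => w_neq.
  by rewrite properEcard negb_and -leqNgt u_min ?orbT.
have /properP [_ [z z_in z_notin]] : d' u \proper d u by rewrite properEneq u_neq (forallP le' u).
have [x [x_sub zx x_far]] := subtop_below_missing d_orn d'_orn d'_in z_in z_notin.
have [y y_min yx] := min_subtop_exists x_sub.
exists u, y; split => //; apply/eqP; apply: contraNT no_between => d'_neq.
apply/existsP; exists (prune d u y).
rewrite prune_ornamentation ?prune_lt ?min_subtop_subtop // andbT /ltO d'_neq andbT.
apply/forallP => v; rewrite ffunE; case: eqP => [->|_]; last exact: (forallP le' v).
apply/subsetP => t t_in; rewrite inE (subsetP (forallP le' u) _ t_in) /=.
by apply: contra (x_far _ t_in) => ty; apply: leT_trans ty yx.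
Qed.

Lemma PopE (d : FF) : orn d -> Pop par d = [ffun u => pop_set d u].
Proof.
move=> d_orn; apply/ffunP => u; rewrite !ffunE; apply/setP => z; rewrite !inE.
case: (boolP (z \in d u)) => //= z_in.
apply/bigcapP/negP => [z_in_covers /existsP [y /andP [y_min zy]]|z_free d' d'_cover].
  by have := z_in_covers _ (prune_coverO d_orn y_min); rewrite ffunE eqxx inE zy andbF.
have [u0 [y [y_min ->]]] := coverO_prune d_orn d'_cover.
rewrite ffunE; case: (eqVneq u u0) => [u_u0|_ //]; subst u0; rewrite inE z_in /=.
by apply/negP => zy; apply: z_free; apply/existsP; exists y; rewrite y_min.
Qed.

(** * The ornaments o_u and the ornamentation u |-> Delta_{o_u}(u) *)

Definition outer (d : FF) u : {set V} :=
  if [pick w | (d u \proper d w) && [forall w', (d u \proper d w') ==> ~~ (d w' \proper d w)]]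
  is Some w then d w else setT.

Lemma is_o_outer (d : FF) u : is_o d u (outer d u).
Proof.
rewrite /outer; case: pickP => [q /andP [uq /forallP q_min]|no_min].
  by left; split; [exists q|split=> // w'; apply/implyP].
right; split=> // w; apply/negP => uw.
have [m /= um m_min] := @arg_minnP _ w [pred w | d u \proper d w] (fun w => #|d w|) uw.
move/negP: (no_min m); apply; rewrite um; apply/forallP => w'; apply/implyP => uw'.
by apply: contraTN (m_min _ uw') => /proper_card; rewrite -ltnNge.
Qed.

Section Outer.
Variable d : FF.

Lemma outer_sup u : d u \subset outer d u.
Proof. by case: (is_o_outer d u) => [[[q ->] [/proper_sub]]|[_ ->]]; rewrite ?subsetT. Qed.

Lemma outer_min u b : orn d -> d u \proper d b -> outer d u \subset d b.
Proof.
move=> d_orn ub; case: (is_o_outer d u) => [[[q ->] [uq q_min]]|[no_sup _]]; last first.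
  by rewrite (negbTE (no_sup b)) in ub.
have [qb|bq] := ornamentation_nested d_orn (proper_ornamentation_in d_orn uq)
                                           (proper_ornamentation_in d_orn ub) => //.
case: (eqVneq (d b) (d q)) => [<-|b_neq_q] //.
by move: (q_min _ ub); rewrite properEneq b_neq_q bq.
Qed.

Lemma outer_convex u t s : orn d -> t \in outer d u -> t <=T s -> s <=T u ->
  s \in outer d u.
Proof.
move=> d_orn; case: (is_o_outer d u) => [[[q ->] [uq _]]|[_ ->]]; last by rewrite inE.
move=> t_in ts su; apply: ornament_top_convex (ornamentation_top q d_orn) t_in ts _.
exact: leT_trans su (proper_ornamentation_le d_orn uq).
Qed.

Lemma outer_mono v w : orn d -> w \in outer d v -> w <=T v -> w != v ->
  outer d w \subset outer d v.
Proof.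
move=> d_orn; case: (is_o_outer d v) => [[[q ->] [vq _]]|[_ ->]] w_in wv w_neq_v; last first.
  exact: subsetT.
apply: outer_min => //; apply: ornamentation_proper => //; apply: contraTneq (vq) => w_q.
have vw : v <=T w by rewrite w_q; apply: proper_ornamentation_le d_orn vq.
by rewrite -w_q (leT_antisym wv vw) properxx.
Qed.

Lemma outer_child u c : orn d -> c \in d u -> par c = u -> c != u -> outer d c = d u.
Proof.
move=> d_orn c_in par_c c_neq_u; have cu := ornamentation_proper d_orn c_in c_neq_u.
case: (is_o_outer d c) => [[[q oq] [cq _]]|[no_sup _]]; last by rewrite (negbTE (no_sup u)) in cu.
rewrite oq in cq *.
have q_in : q \in d u by apply: (subsetP (outer_min d_orn cu)); rewrite oq ornamentation_in.
have c_neq_q : c != q by apply: contraTneq (cq) => ->; rewrite properxx.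
have uq : u <=T q by rewrite -par_c par_leT // (proper_ornamentation_le d_orn cq).
by rewrite (leT_antisym (ornamentation_le d_orn q_in) uq).
Qed.

End Outer.

Definition pop_preimage (d : FF) : FF := [ffun u => DeltaS par (outer d u) u].

Section PopPreimage.
Variable d : FF.
Local Notation d0 := (pop_preimage d).

Lemma pop_preimageP u t : (t \in d0 u) = (t \in outer d u) && (t <=T u).
Proof. by rewrite ffunE inE. Qed.

Lemma pop_preimage_ornamentation : orn d -> orn d0.
Proof.
move=> d_orn; apply: ornamentation_intro => [u|v w].
  apply/ornament_topP; split=> [|w]; rewrite !pop_preimageP.
    by rewrite leTT (subsetP (outer_sup d u)) ?ornamentation_in.
  move=> /andP [w_in wu]; split=> // w_neq_u.
  by rewrite (par_leT wu w_neq_u) (outer_convex d_orn w_in (leT_par w)) ?par_leT.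
rewrite pop_preimageP => /andP [w_in wv]; case: (eqVneq w v) => [->|w_neq_v]; first exact: subxx.
apply/subsetP => t; rewrite !pop_preimageP => /andP [t_in tw].
by rewrite (subsetP (outer_mono d_orn w_in wv w_neq_v) _ t_in) (leT_trans tw wv).
Qed.

Lemma subtop_pop_preimage_par u y : orn d -> subtop d0 u y -> y \in d u -> par y = u.
Proof.
move=> d_orn y_sub y_in; have yu := ornamentation_le d_orn y_in.
have [c [par_c c_neq_u yc]] := leT_child yu (subtop_neq y_sub).
have cu : c <=T u by rewrite -par_c leT_par.
have c_in : c \in d u := ornament_top_convex (ornamentation_top u d_orn) y_in yc cu.
case: (eqVneq c y) => [<- //|c_neq_y].
have := subtop_notin y_sub yc cu c_neq_y c_neq_u.
by rewrite pop_preimageP (outer_child d_orn c_in par_c c_neq_u) y_in yc.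
Qed.

Lemma outer_subtop_pop_preimage u x : orn d -> subtop d0 u x -> x \notin d u ->
  outer d x = outer d u.
Proof.
move=> d_orn x_sub x_notin; move: (subtop_in x_sub); rewrite pop_preimageP => /andP [x_in xu].
pose P := [pred w | [&& x <=T w, w <=T u, w != u & x \in d w]].
have Px : P x by rewrite /= leTT xu (subtop_neq x_sub) ornamentation_in.
have [w /and4P [xw wu w_neq_u x_in_w] w_max] := leT_maximal Px.
have w_in : w \in outer d u := outer_convex d_orn x_in xw wu.
have ow : outer d w = outer d u.
  apply/eqP; rewrite eqEsubset outer_mono //=.
  case: (is_o_outer d w) => [[[b ->] [wb _]]|[_ ->]]; last exact: subsetT.
  have x_in_b := subsetP (proper_sub wb) _ x_in_w.
  have [bu|ub] := orP (leT_total (proper_ornamentation_le d_orn wb) wu).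
    case: (eqVneq b u) => [b_u|b_neq_u]; first by rewrite -b_u x_in_b in x_notin.
    have Pb : P b by rewrite /= (leT_trans xw (proper_ornamentation_le d_orn wb)) bu b_neq_u.
    have b_w := w_max _ Pb (proper_ornamentation_le d_orn wb).
    by rewrite b_w properxx in wb.
  have u_in : u \in d b :=
    ornament_top_convex (ornamentation_top b d_orn) (proper_ornamentation_in d_orn wb) wu ub.
  apply: outer_min => //; apply: ornamentation_proper => //.
  by apply: contraNneq x_notin => ->.
case: (eqVneq w x) => [<- //|w_neq_x].
have := subtop_notin x_sub xw wu w_neq_x w_neq_u.
by rewrite pop_preimageP xw andbT (subsetP (outer_sup d w) _ x_in_w).
Qed.

Lemma pop_set_pop_preimage_sub u : orn d -> pop_set d0 u \subset d u.
Proof.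
move=> d_orn; have d0_orn := pop_preimage_ornamentation d_orn.
apply/subsetP => z; rewrite inE => /andP [z_in0 z_free]; apply: contraNT z_free => z_notin.
have z_neq_u : z != u by apply: contraNneq z_notin => ->; apply: ornamentation_in.
have [x x_sub z_in_x] := subtop_exists d0_orn z_in0 z_neq_u.
have zx : z <=T x by move: z_in_x; rewrite pop_preimageP => /andP [].
have x_notin : x \notin d u.
  apply: contra z_notin => x_in; move: z_in_x.
  have par_x := subtop_pop_preimage_par d_orn x_sub x_in.
  by rewrite pop_preimageP (outer_child d_orn x_in par_x (subtop_neq x_sub)) => /andP [].
apply/existsP; exists x; rewrite zx andbT /min_subtop x_sub /=.
apply/forallP => x'; apply/implyP => /andP [x'_sub x'x]; apply/eqP.
case: (eqVneq x x') => [-> //|x_neq_x'].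
have x'_in : x' \in outer d x.
  rewrite (outer_subtop_pop_preimage d_orn x_sub x_notin).
  by move: (subtop_in x'_sub); rewrite pop_preimageP => /andP [].
have := subtop_notin x'_sub x'x (subtop_le d0_orn x_sub) x_neq_x' (subtop_neq x_sub).
by rewrite pop_preimageP x'_in x'x.
Qed.

End PopPreimage.

(** * The image of Pop *)

Definition Delta_separated (d : FF) :=
  forall (u : V) (o : {set V}), is_o d u o ->
    forall u' : V, childT par u' u -> u' \in d u -> DeltaS par (d u) u' != DeltaS par o u'.

Section PopPreimageImage.
Variable d : FF.
Hypotheses (d_orn : orn d) (d_sep : Delta_separated d).
Local Notation d0 := (pop_preimage d).

Lemma outer_child_witness u y : childT par y u -> y \in d u ->
  exists2 w, w \in outer d u & (w <=T y) && (w \notin d u).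
Proof.
move=> y_child y_in; have /subsetPn [w] : ~~ (DeltaS par (outer d u) y \subset DeltaS par (d u) y).
  apply: contra (d_sep (is_o_outer d u) y_child y_in) => outer_sub.
  rewrite eqEsubset outer_sub andbT; apply/subsetP => t; rewrite !inE => /andP [t_in ->].
  by rewrite (subsetP (outer_sup d u)).
by rewrite !inE => /andP [w_outer wy]; rewrite wy andbT => w_notin; exists w; rewrite ?wy.
Qed.

Lemma sub_pop_set_pop_preimage u : d u \subset pop_set d0 u.
Proof.
have d0_orn := pop_preimage_ornamentation d_orn.
apply/subsetP => z z_in; rewrite inE pop_preimageP (subsetP (outer_sup d u) _ z_in).
rewrite (ornamentation_le d_orn z_in) /=; apply/existsP => -[y /andP [y_min zy]].
have y_sub := min_subtop_subtop y_min.
have [y_outer yu] : y \in outer d u /\ y <=T u by apply/andP; rewrite -pop_preimageP subtop_in.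
have y_in : y \in d u := ornament_top_convex (ornamentation_top u d_orn) z_in zy yu.
have par_y := subtop_pop_preimage_par d_orn y_sub y_in.
have y_child : childT par y u by rewrite /childT (subtop_neq y_sub) par_y eqxx.
have [w w_outer /andP [wy w_notin]] := outer_child_witness y_child y_in.
have w_neq_u : w != u by apply: contraNneq w_notin => ->; apply: ornamentation_in.
have w_in0 : w \in d0 u by rewrite pop_preimageP w_outer (leT_trans wy yu).
have [x x_sub w_in_x] := subtop_exists d0_orn w_in0 w_neq_u.
have wx : w <=T x by move: w_in_x; rewrite pop_preimageP => /andP [].
suff x_y : x = y.
  move: w_in_x; rewrite x_y pop_preimageP (outer_child d_orn y_in par_y (subtop_neq y_sub)).
  by rewrite (negbTE w_notin).
have [xy|yx] := orP (leT_total wx wy); first exact: min_subtop_min y_min x_sub xy.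
case: (eqVneq x y) => // x_neq_y.
have y_in_x : y \in d0 x := ornament_top_convex (ornamentation_top x d0_orn) w_in_x wy yx.
have := subtop_notin y_sub yx (subtop_le d0_orn x_sub) x_neq_y (subtop_neq x_sub).
by rewrite y_in_x.
Qed.

Lemma Pop_pop_preimage : Pop par (pop_preimage d) = d.
Proof.
rewrite PopE ?pop_preimage_ornamentation //; apply/ffunP => u; rewrite ffunE.
by apply/eqP; rewrite eqEsubset pop_set_pop_preimage_sub // sub_pop_set_pop_preimage.
Qed.

End PopPreimageImage.

Lemma subtop_child (D : FF) u c : c \in D u -> childT par c u -> subtop D u c.
Proof.
move=> c_in /andP [c_neq_u /eqP par_c]; apply/subtopP; split=> // w cw wu w_neq_c w_neq_u.
have uw : u <=T w by rewrite -par_c par_leT // eq_sym.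
by rewrite (leT_antisym wu uw) eqxx in w_neq_u.
Qed.

Lemma min_subtop_pop_set (D : FF) u q y : orn D -> u \in pop_set D q -> u != q ->
  min_subtop D u y -> y \in pop_set D q.
Proof.
move=> D_orn; rewrite !inE => /andP [u_in u_free] u_neq_q y_min.
have y_in := subtop_in (min_subtop_subtop y_min).
rewrite (subsetP (ornamentation_sub D_orn u_in) _ y_in) /=.
apply: contra u_free => /existsP [y' /andP [y'_min yy']].
apply/existsP; exists y'; rewrite y'_min /=.
have yu := ornamentation_le D_orn y_in.
have [y'u|//] := orP (leT_total yy' yu).
case: (eqVneq u y') => [->|u_neq_y']; first exact: leTT.
have y'_in : y' \in D u := ornament_top_convex (ornamentation_top u D_orn) y_in yy' y'u.
have := subtop_notin (min_subtop_subtop y'_min) y'u (ornamentation_le D_orn u_in) u_neq_y' u_neq_q.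
by rewrite y'_in.
Qed.

Lemma pop_set_top (D : FF) u : orn D -> u \in pop_set D u.
Proof.
move=> D_orn; rewrite inE ornamentation_in //=; apply/existsP => -[y /andP [y_min uy]].
have y_sub := min_subtop_subtop y_min.
by move: (subtop_neq y_sub); rewrite (leT_antisym (subtop_le D_orn y_sub) uy) eqxx.
Qed.

Lemma Pop_Delta_separated (D : FF) : orn D -> Delta_separated (Pop par D).
Proof.
move=> D_orn u o; rewrite PopE // => o_u c c_child; rewrite ffunE => c_in.
have c_in_D : c \in D u by move: c_in; rewrite inE => /andP [].
have [y y_min yc] := min_subtop_exists (subtop_child c_in_D c_child).
have y_notin : y \notin pop_set D u.
  by rewrite inE negb_and negbK; apply/orP; right; apply/existsP; exists y; rewrite y_min leTT.
have y_in_o : y \in o.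
  case: o_u => [[[q ->] [uq _]]|[_ ->]]; last by rewrite inE.
  move: uq; rewrite !ffunE => uq; apply: (min_subtop_pop_set D_orn _ _ y_min).
    exact: subsetP (proper_sub uq) _ (pop_set_top u D_orn).
  by apply: contraTneq uq => ->; rewrite properxx.
apply/negP => /eqP Delta_eq; have : y \in DeltaS par o c by rewrite inE y_in_o yc.
by rewrite -Delta_eq inE (negbTE y_notin).
Qed.

End OrnamentationPop.

Theorem theorem1p2 (V : finType) (r : V) (par : V -> V)
  (Htree : is_rooted_tree r par) (d : {ffun V -> {set V}})
  (Hd : ornamentation par d) :
  in_Pop_image par d <->
  (forall (u : V) (o : {set V}), is_o d u o ->
     forall u' : V, childT par u' u -> u' \in d u ->
       DeltaS par (d u) u' != DeltaS par o u').
Proof.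
split=> [[D [D_orn <-]]|d_sep]; first exact: (Pop_Delta_separated Htree D_orn).
exists (pop_preimage par d); split; first exact: (pop_preimage_ornamentation Htree Hd).
exact: (Pop_pop_preimage Htree Hd d_sep).
Qed.
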